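(* Let $t \in \mathbb{N}$ and let $G \in \mathcal{X}_t$ be a graph with no cut vertex. Let $A,B\subseteq V(G)$ be disjoint independent sets that are complete to each other, with $|A|,|B|\ge 3t^2+t+1$, such that $G[A\cup B]$ is a maximal induced complete bipartite subgraph of $G$ (i.e. there are no independent sets $A'\supseteq A$, $B'\supseteq B$, disjoint and complete to each other, with $A'\cup B'\supsetneq A\cup B$). Then $A\cup B$ is a module of $G$.
   Context: All graphs are finite and simple. For graphs $G_1=(V_1,E_1)$, $G_2=(V_2,E_2)$, $G_1\cap G_2=(V_1\cap V_2, E_1\cap E_2)$. For a graph $G=(V,E)$ and an injective map $\alpha$ on $V$, $G^{\alpha}$ has vertex set $\alpha(V)$ and edge set $\{\{\alpha(v),\alpha(w)\}: \{v,w\}\in E\}$. We write $G\xrightarrow{\cap} H$ if $H$ is (isomorphic to) $G^{\alpha_1}\cap\cdots\cap G^{\alpha_k}$ for some $k\ge1$ and injective maps $\alpha_1,\dots,\alpha_k$ on $V(G)$. For a set $M$ of graphs, $\mathrm{SiFree}(M)$ is the class of graphs $G$ such that $G\xrightarrow{\cap}F$ holds for no $F\in M$. For integers $a,b,c\ge1$, $S_{a,b,c}$ is the tree consisting of a vertex of degree $3$ together with three pendant paths having $a$, $b$, $c$ edges respectively; $tS_{t,t,t}$ is the disjoint union of $t$ copies of $S_{t,t,t}$, and $\mathcal{X}_t=\mathrm{SiFree}(\{tS_{t,t,t}\})$. A cut vertex is a vertex whose removal increases the number of connected components. Sets $X,Y$ are complete (anticomplete) to each other if every (no) vertex of $X$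 is adjacent to every (any) vertex of $Y$. A set $U\subseteq V(G)$ is a module if every vertex of $V(G)\setminus U$ is complete or anticomplete to $U$. *)

From mathcomp Require Import all_boot.
Set Implicit Arguments. Unset Strict Implicit. Unset Printing Implicit Defensive.

Record sgraph := SGraph {
  svert : finType;
  sadj : rel svert;
  sadj_sym : symmetric sadj;
  sadj_irr : irreflexive sadj }.

(* G -->cap H : H is isomorphic to G^{alpha_0} cap ... cap G^{alpha_{k-1}}
   for some k >= 1 and injective maps alpha_i on V(G).  The ambient universe
   into which the alpha_i map is taken to be nat.
   Vertex set of the intersection: {u | forall i < k, u in alpha_i(V)};
   edge set: {{u,w} | forall i < k, {u,w} = {alpha_i a, alpha_i b}, ab in E}.
   The isomorphism is an injection f : V(H) -> nat onto that vertex set that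
   preserves and reflects adjacency. *)
Definition si_to (G H : sgraph) : Prop :=
  exists (k : nat) (alpha : nat -> svert G -> nat),
    0 < k /\ (forall i, i < k -> injective (alpha i)) /\
    exists f : svert H -> nat,
      injective f /\
      (forall u : nat,
          (exists x, f x = u) <-> (forall i, i < k -> exists v, alpha i v = u)) /\
      (forall x y : svert H,
          @sadj H x y <->
          (forall i, i < k -> exists a b,
               @sadj G a b /\ alpha i a = f x /\ alpha i b = f y)).

Definition SiFree (M : sgraph -> Prop) (G : sgraph) : Prop :=
  forall F, M F -> ~ si_to G F.

(* t S_{t,t,t}: vertices (c, None) = centre of copy c,
   (c, Some (j, p)) = vertex at distance p+1 from the centre on leg j of copy c. *)
Definition tS_vert (t : nat) : finType := ('I_t * option ('I_3 * 'I_t))%type.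

Definition tS_adj0 (t : nat) (x y : tS_vert t) : bool :=
  (x.1 == y.1) &&
  match x.2, y.2 with
  | None, Some (_, p) => val p == 0
  | Some (j, p), Some (j', p') => (j == j') && (val p' == (val p).+1)
  | _, _ => false
  end.

Definition tS_adj (t : nat) : rel (tS_vert t) :=
  fun x y => tS_adj0 x y || tS_adj0 y x.

Lemma tS_adj_sym t : symmetric (@tS_adj t).
Proof. by move=> x y; rewrite /tS_adj orbC. Qed.

Lemma tS_adj_irr t : irreflexive (@tS_adj t).
Proof.
move=> [c [[j p]|]]; rewrite /tS_adj /tS_adj0 /= ?eqxx //=.
by rewrite orbb; apply/negP => /eqP /n_Sn.
Qed.

Definition tStt (t : nat) : sgraph := SGraph (@tS_adj_sym t) (@tS_adj_irr t).

Definition X_class (t : nat) (G : sgraph) : Prop :=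
  SiFree (fun F => F = tStt t) G.

Section GraphNotions.
Variable G : sgraph.
Local Notation V := (svert G).
Local Notation adj := (@sadj G).

Definition ncomp : nat := #|[set [set y | connect adj x y] | x : V]|.

Definition adj_del (v : V) : rel V := fun x y => [&& adj x y, x != v & y != v].

Definition ncomp_del (v : V) : nat :=
  #|[set [set y | connect (adj_del v) x y] | x in [set~ v]]|.

Definition cut_vertex (v : V) : Prop := ncomp < ncomp_del v.

Definition independent (A : {set V}) : Prop :=
  forall x y, x \in A -> y \in A -> ~~ adj x y.

Definition complete_to (A B : {set V}) : Prop :=
  forall x y, x \in A -> y \in B -> adj x y.

Definition anticomplete_to (A B : {set V}) : Prop :=
  forall x y, x \in A -> y \in B -> ~~ adj x y.

Definition is_module (U : {set V}) : Prop :=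
  forall v, v \notin U -> complete_to [set v] U \/ anticomplete_to [set v] U.

End GraphNotions.

(* Suppose some v outside A u B has a neighbour and a non-neighbour in A u B; we
   show G -->cap t S_{t,t,t}.  It suffices to embed H := t S_{t,t,t} injectively and
   edge-preservingly into G so that any prescribed non-adjacent pair x, y of H goes to
   a non-adjacent pair: one copy of G per non-edge, each relabelled so that only the
   image of H survives in the intersection.  H is bipartite with fewer than |A|, |B|
   vertices, so it embeds into the complete bipartite graph between A and B with any
   choice of side for each component; this separates x and y unless they are at odd
   distance in one component.  Then, by maximality, v has a neighbour a1 and a
   non-neighbour y0 on the same side, and since a1 is not a cut vertex there is a path
   from v back to A u B avoiding a1 and y0.  Send x (a leg vertex, with y not further
   out on that leg) to v, the outer part of its leg along the path and then alternately
   through A and B, its inner neighbour to a1, y to y0, and the rest bipartitely. *)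

From mathcomp Require Import all_boot zify.
From Stdlib Require Import ClassicalEpsilon.
Set Implicit Arguments. Unset Strict Implicit. Unset Printing Implicit Defensive.

Definition embedding (G H : sgraph) (phi : svert H -> svert G) : Prop :=
  injective phi /\ forall x y, @sadj H x y -> @sadj G (phi x) (phi y).

(* The copy alpha_i sends the image of phi_i to the even numbers 2 * rank x and
   every other vertex of G to an odd number that depends on i, so the intersection
   of the k >= 2 copies has vertex set exactly the even numbers. *)
Lemma si_to_of_embedding_family (G H : sgraph) (k : nat)
    (phi : nat -> svert H -> svert G) :
  1 < k -> (forall i, embedding (phi i)) ->
  (forall x y, ~~ @sadj H x y ->
     exists2 i, i < k & ~~ @sadj G (phi i x) (phi i y)) ->
  si_to G H.
Proof.
move=> k_gt1 phi_emb separate.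
pose f (x : svert H) := (2 * enum_rank x)%N.
have f_inj : injective f.
  by move=> x y /eqP; rewrite eqn_mul2l /= => /eqP /val_inj /enum_rank_inj.
have f_even x : odd (f x) = false by rewrite oddM.
pose alpha i (g : svert G) :=
  if [pick x | phi i x == g] is Some x then f x
  else (2 * (#|svert G| * i + enum_rank g)).+1.
have alpha_phi i x : alpha i (phi i x) = f x.
  rewrite /alpha; case: pickP => [x' /eqP /(proj1 (phi_emb i)) -> //|/(_ x)].
  by rewrite eqxx.
have alpha_inj i : injective (alpha i).
  move=> g g'; rewrite /alpha.
  case: pickP => [x /eqP <-|_]; case: pickP => [x' /eqP <-|_].
  - by move/f_inj ->.
  - by move=> e; have := f_even x; rewrite e /= oddM.
  - by move=> e; have := f_even x'; rewrite -e /= oddM.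
  - case=> /eqP; rewrite eqn_mul2l eqn_add2l /= => /eqP /val_inj.
    exact: enum_rank_inj.
exists k, alpha; split; first exact: ltnW.
split; first by move=> i _; exact: alpha_inj.
exists f; split => //; split.
- move=> u; split=> [[x <-] i _|inall]; first by exists (phi i x); rewrite alpha_phi.
  have [g0 e0] := inall 0 (ltnW k_gt1); have [g1 e1] := inall 1 k_gt1.
  move: e0 e1; rewrite /alpha; case: pickP => [x _ <- _|_]; first by exists x.
  case: pickP => [x _ <- e|_ <-]; first by have := f_even x; rewrite e /= oddM.
  case=> /eqP; rewrite muln0 muln1 add0n eqn_mul2l /= => /eqP e.
  by have := ltn_ord (enum_rank g0); rewrite -e ltnNge leq_addr.
- move=> x y; split=> [xy i _|adj_all].
    exists (phi i x), (phi i y); rewrite !alpha_phi; split => //.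
    exact: (proj2 (phi_emb i)).
  apply/negPn/negP => /separate [i i_lt nxy].
  have [a [b [ab [ea eb]]]] := adj_all i i_lt.
  move: ea eb; rewrite -!(alpha_phi i) => /alpha_inj ea /alpha_inj eb.
  by move: ab; rewrite ea eb (negbTE nxy).
Qed.

Lemma si_to_of_embeddings (G H : sgraph) (phi0 : svert H -> svert G) :
  embedding phi0 ->
  (forall x y, ~~ @sadj H x y ->
     exists phi, embedding phi /\ ~~ @sadj G (phi x) (phi y)) ->
  si_to G H.
Proof.
move=> emb0 separate.
have ex (q : svert H * svert H) : exists phi : svert H -> svert G,
    embedding phi /\ (~~ @sadj H q.1 q.2 -> ~~ @sadj G (phi q.1) (phi q.2)).
  case: (boolP (@sadj H q.1 q.2)) => [_|/separate [phi [emb nadj]]]; last by exists phi.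
  by exists phi0.
pose Phi q := proj1_sig (constructive_indefinite_description _ (ex q)).
have PhiP q := proj2_sig (constructive_indefinite_description _ (ex q)).
pose n := #|{: svert H * svert H}|.
pose phi i := if insub i : option 'I_n is Some k then Phi (enum_val k) else phi0.
apply: (@si_to_of_embedding_family _ _ n.+2 phi) => // [i|x y nxy].
  by rewrite /phi; case: insub => [k|//]; case: (PhiP (enum_val k)).
exists (enum_rank (x, y)); first by rewrite (leq_trans (ltn_ord _)) // ltnW.
by rewrite /phi valK enum_rankK; exact: (proj2 (PhiP (x, y)) nxy).
Qed.

Definition side (T : finType) (A B : {set T}) (s : bool) : {set T} :=
  if s then B else A.

(* Points outside S are enumerated and sent, in order, to the unused points of
   their prescribed side; there are enough of them since |S| <= |H| <= |A|, |B|. *)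
Lemma injective_extension_in_sides (H T : finType) (S : {set H}) (sigma : H -> T)
    (A B : {set T}) (sd : H -> bool) :
  [disjoint A & B] -> #|H| <= #|A| -> #|H| <= #|B| -> {in S &, injective sigma} ->
  exists phi : H -> T, [/\ injective phi, {in S, phi =1 sigma} &
    forall z, z \notin S -> phi z \in side A B (sd z) :\: sigma @: S].
Proof.
move=> dAB hA hB sigma_inj.
pose R := sigma @: S.
pose rest := enum (~: S).
pose pool s := enum (side A B s :\: R).
have size_pool s : size rest <= size (pool s).
  rewrite -!cardE cardsCs setCK cardsD.
  have : #|R| <= #|S| := leq_imset_card sigma S.
  have := max_card S; have := subset_leq_card (subsetIr (side A B s) R).
  by rewrite /side; case: s; lia.
pose phi z := if z \in S then sigma z else nth (sigma z) (pool (sd z)) (index z rest).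
have idx_lt z : z \notin S -> index z rest < size (pool (sd z)).
  by move=> zS; rewrite (leq_trans _ (size_pool _)) // index_mem mem_enum inE.
have phi_out z : z \notin S -> phi z \in side A B (sd z) :\: R.
  move=> zS; rewrite /phi (negbTE zS).
  by have := mem_nth (sigma z) (idx_lt z zS); rewrite mem_enum.
exists phi; split => // [z z'|z zS]; last by rewrite /phi zS.
case: (boolP (z \in S)) => zS; case: (boolP (z' \in S)) => z'S.
- by rewrite /phi zS z'S; exact: sigma_inj.
- by move=> e; have := phi_out z' z'S; rewrite -e /phi zS inE imset_f ?andbF.
- by move=> e; have := phi_out z zS; rewrite e /phi z'S inE imset_f ?andbF.
have [/setDP [hz _] /setDP [hz' _]] := (phi_out z zS, phi_out z' z'S).
case: (eqVneq (sd z) (sd z')) => esd e; last first.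
  move: hz hz' esd; rewrite e; case: (sd z); case: (sd z') => //= h h'.
  - by rewrite (disjointFr dAB h') in h.
  - by rewrite (disjointFr dAB h) in h'.
have lz := idx_lt z zS; have lz' := idx_lt z' z'S; rewrite -esd in lz'.
move: e; rewrite /phi (negbTE zS) (negbTE z'S) -esd.
rewrite (set_nth_default (sigma z') (sigma z)) //.
move/eqP; rewrite nth_uniq ?enum_uniq // => /eqP e.
rewrite -[z](nth_index z (_ : z \in rest)) ?mem_enum ?inE //.
by rewrite e nth_index // mem_enum inE.
Qed.

Lemma card_imset_lt_finer (T U0 U1 : finType) (D : {set T}) (g0 : T -> U0)
    (g1 : T -> U1) x y :
  {in D &, forall z z', g1 z = g1 z' -> g0 z = g0 z'} -> x \in D -> y \in D ->
  g0 x = g0 y -> g1 x != g1 y -> #|g0 @: D| < #|g1 @: D|.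
Proof.
move=> finer xD yD e0 n1.
pose h K := if [pick z in D | g1 z == K] is Some z then g0 z else g0 x.
have hE z : z \in D -> h (g1 z) = g0 z.
  move=> zD; rewrite /h; case: pickP => [z' /andP [z'D /eqP] | /(_ z)].
    exact: finer.
  by rewrite zD eqxx.
have -> : g0 @: D = h @: (g1 @: D).
  rewrite -imset_comp; apply: eq_in_imset => z zD /=; exact/esym/hE.
rewrite ltn_neqAle leq_imset_card andbT.
apply: contra n1 => /imset_injP inj.
by apply/eqP/inj; rewrite ?imset_f ?hE.
Qed.

Section NonCutVertex.
Variable G : sgraph.
Local Notation V := (svert G).
Local Notation adj := (@sadj G).

Lemma connect_adj_sym : connect_sym adj.
Proof. exact/sym_connect_sym/sadj_sym. Qed.

(* The components of G - a refine those of G, and a lies in the component of x;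
   so if x and y were separated by removing a, G - a would have more components. *)
Lemma connect_del_noncut (a x y : V) : ~ cut_vertex a -> x != a -> y != a ->
  adj x a -> connect adj x y -> connect (adj_del a) x y.
Proof.
move=> noncut xa ya xadj cxy; apply/negPn/negP => ncxy; apply: noncut.
pose comp z := [set w | connect adj z w].
pose comp_del z := [set w | connect (adj_del a) z w].
have compE z z' : connect adj z z' -> comp z = comp z'.
  move=> czz'; apply/setP => w; rewrite !inE; apply/idP/idP; apply: connect_trans => //.
  by rewrite connect_adj_sym.
rewrite /cut_vertex /ncomp /ncomp_del.
have -> : [set [set w | connect adj z w] | z : V] = comp @: [set~ a].
  apply/setP => K; apply/imsetP/imsetP => [[z _ ->]|[z _ ->]]; last by exists z.
  case: (eqVneq z a) => [->|za]; last by exists z; rewrite ?inE.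
  by exists x; rewrite ?inE //; apply/compE; rewrite connect_adj_sym connect1.
apply: (@card_imset_lt_finer _ _ _ _ comp comp_del x y); rewrite ?inE //.
- move=> z z' _ _ e; apply: compE.
  have : z' \in comp_del z by rewrite e inE connect0.
  by rewrite inE; apply: connect_sub => u w /and3P [uw _ _]; exact: connect1.
- exact: compE.
- apply/eqP => e; move/negP: ncxy; apply.
  have : y \in comp_del x by rewrite e inE connect0.
  by rewrite inE.
Qed.

End NonCutVertex.

Lemma path_del_neq (G : sgraph) (a x : svert G) p :
  path (adj_del a) x p -> {in p, forall z, z != a}.
Proof.
elim: p x => [//|y p IH] x /= /andP [/and3P [_ _ ya] yp] z.
by rewrite inE => /predU1P [-> //|]; exact: IH yp z.
Qed.

Lemma connect_first_hit (T : finType) (e : rel T) (U : {set T}) x y :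
  connect e x y -> x \notin U -> y \in U ->
  exists q, [/\ path e x q, uniq (x :: q), last x q \in U &
                {in q, forall z, z \in U -> z = last x q}].
Proof.
move=> /connectP [p p_path ->] xU.
case: (shortenP p_path) => p' p'_path p'_uniq _ yU {p_path}.
have hasU : has (mem U) p'.
  apply/hasP; exists (last x p') => //.
  by move: (mem_last x p'); rewrite inE => /predU1P [e'|//]; rewrite -e' yU in xU.
pose i := find (mem U) p'.
have i_lt : i < size p' by rewrite -has_find.
have take_last : last x (take i.+1 p') = nth x p' i.
  by rewrite (take_nth x i_lt) last_rcons.
exists (take i.+1 p'); split.
- by rewrite -(cat_take_drop i.+1 p') cat_path in p'_path; case/andP: p'_path.
- exact: (take_uniq i.+2 p'_uniq).
- by rewrite take_last; exact: nth_find.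
move=> z; rewrite take_last (take_nth x i_lt) mem_rcons inE => /predU1P [-> //|zt zU].
have : has (mem U) (take i p') by apply/hasP; exists z.
by rewrite has_take // ltnn.
Qed.

Section Biclique.
Variable G : sgraph.
Local Notation V := (svert G).
Local Notation adj := (@sadj G).

Definition maximal_biclique (A B : {set V}) : Prop :=
  ~ exists A' B' : {set V},
      (A \subset A') /\ (B \subset B') /\ [disjoint A' & B'] /\
      independent A' /\ independent B' /\ complete_to A' B' /\
      (A :|: B \proper A' :|: B').

Lemma maximal_biclique_sym A B : maximal_biclique A B -> maximal_biclique B A.
Proof.
move=> maxAB [A' [B' [sA [sB [dA'B' [iA' [iB' [cA'B' ABA'B']]]]]]]].
apply: maxAB; exists B', A'; do !split => //; first by rewrite disjoint_sym.
  by move=> x y xB yA; rewrite sadj_sym; exact: cA'B'.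
by rewrite setUC (setUC B').
Qed.

Lemma biclique_add_vertex (A B : {set V}) v :
  [disjoint A & B] -> independent A -> independent B -> complete_to A B ->
  v \notin A :|: B -> {in A, forall a, ~~ adj v a} -> {in B, forall b, adj v b} ->
  ~ maximal_biclique A B.
Proof.
move=> dAB iA iB cAB vAB nvA vB; apply.
have [vA vB'] : v \notin A /\ v \notin B by move: vAB; rewrite inE negb_or => /andP.
exists (v |: A), B; do !split => //; first exact: subsetUr.
- rewrite -setI_eq0; apply/eqP/setP => z; rewrite !inE.
  case: (eqVneq z v) => [->|_] /=; first by rewrite (negbTE vB').
  by apply/negbTE/negP => /andP [zA zB]; rewrite (disjointFr dAB zA) in zB.
- move=> x y; rewrite !inE => /predU1P [->|xA] /predU1P [->|yA].
  + by rewrite sadj_irr.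
  + exact: nvA.
  + by rewrite sadj_sym nvA.
  + exact: iA.
- by move=> x y; rewrite !inE => /predU1P [->|xA] yB; [exact: vB | exact: cAB].
apply/properP; split; first by rewrite setUSS ?subsetUr.
by exists v => //; rewrite !inE eqxx.
Qed.

Variables A B : {set V}.
Hypothesis dAB : [disjoint A & B].
Hypothesis iA : independent A.
Hypothesis iB : independent B.
Hypothesis cAB : complete_to A B.

Lemma mem_side_setU s z : z \in side A B s -> z \in A :|: B.
Proof. by rewrite inE; case: s => ->; rewrite ?orbT. Qed.

Lemma side_mem z : z \in A :|: B -> z \in side A B (z \in B).
Proof. by rewrite inE /side; case: (boolP (z \in B)); rewrite ?orbF. Qed.

Lemma side_memB s z : z \in side A B s -> (z \in B) = s.
Proof. by case: s => //= zA; exact: (disjointFr dAB zA). Qed.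

Lemma side_adj s s' g g' :
  g \in side A B s -> g' \in side A B s' -> s != s' -> adj g g'.
Proof. by case: s; case: s' => //= g_in g'_in _; [rewrite sadj_sym|]; exact: cAB. Qed.

Lemma side_nadj s g g' : g \in side A B s -> g' \in side A B s -> ~~ adj g g'.
Proof. by case: s => /=; [exact: iB | exact: iA]. Qed.

(* Otherwise v could be added to one side of the biclique. *)
Lemma splitter_same_side v : maximal_biclique A B -> v \notin A :|: B ->
  (exists2 a, a \in A :|: B & adj v a) -> (exists2 b, b \in A :|: B & ~~ adj v b) ->
  exists s a1 y0, [/\ a1 \in side A B s, adj v a1, y0 \in side A B s & ~~ adj v y0].
Proof.
move=> maxAB vAB [a aAB va] [b bAB vb].
pose mixed s := [exists a1 in side A B s, adj v a1] &&
                [exists y0 in side A B s, ~~ adj v y0].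
case: (pickP mixed) => [s /andP [/exists_inP [a1 a1s va1] /exists_inP [y0 y0s vy0]]|].
  by exists s, a1, y0.
move=> unmixed.
have all_adj s z z' : z \in side A B s -> adj v z -> z' \in side A B s -> adj v z'.
  move=> zs vz z's; apply/negPn/negP => vz'; move: (unmixed s); rewrite /mixed.
  by move/negbT; rewrite negb_and => /orP [] /exists_inP []; [exists z|exists z'].
exfalso; have aS := side_mem aAB; have bS := side_mem bAB.
case: (eqVneq (a \in B) (b \in B)) => [eab|nab].
  by move: bS; rewrite -eab => /(all_adj _ _ _ aS va); rewrite (negbTE vb).
have nvb z : z \in side A B (b \in B) -> ~~ adj v z.
  by move=> zS; apply: contra vb => vz; exact: all_adj _ _ _ zS vz bS.
move: aS bS nab nvb; case: (a \in B); case: (b \in B) => //= aB bA _ nvb.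
- apply: (biclique_add_vertex dAB iA iB cAB vAB _ _ maxAB) => [z /nvb //|z zB].
  exact: (all_adj true a z aB va zB).
- apply: (biclique_add_vertex (v := v) _ iB iA _ _ _ _ (maximal_biclique_sym maxAB)).
  + by rewrite disjoint_sym.
  + by move=> x y xB yA; rewrite sadj_sym; exact: cAB.
  + by rewrite setUC.
  + by move=> z /nvb.
  + by move=> z zA; exact: (all_adj false a z aB va zA).
Qed.

End Biclique.

Section Detour.
Variable G : sgraph.
Local Notation V := (svert G).
Local Notation adj := (@sadj G).
Variables A B : {set V}.

Record detour (v a1 y0 : V) (P : seq V) : Prop := Detour {
  detour_a1 : a1 \in A :|: B;
  detour_adj_a1 : adj v a1;
  detour_y0 : y0 \in A :|: B;
  detour_same_side : (y0 \in B) = (a1 \in B);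
  detour_nadj_y0 : ~~ adj v y0;
  detour_uniq : uniq (v :: P);
  detour_path : path adj v P;
  detour_last : last v P \in A :|: B;
  detour_a1_notin : a1 \notin v :: P;
  detour_y0_notin : y0 \notin v :: P }.

Hypothesis dAB : [disjoint A & B].
Hypothesis iA : independent A.
Hypothesis iB : independent B.
Hypothesis cAB : complete_to A B.
Hypothesis maxAB : maximal_biclique A B.
Hypothesis noncut : forall v : V, ~ cut_vertex v.
Hypothesis A_ge3 : 3 <= #|A|.
Hypothesis B_ge3 : 3 <= #|B|.

Lemma side_ge3 s : 3 <= #|side A B s|.
Proof. by case: s. Qed.

(* If a1 is the only neighbour of v in A u B, the path leaves v through a vertex
   outside A u B, which exists since a1 is not a cut vertex; y0 is then chosen
   on the side of a1 and away from the end of the path. *)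
Lemma detour_exists v : v \notin A :|: B ->
  (exists2 a, a \in A :|: B & adj v a) -> (exists2 b, b \in A :|: B & ~~ adj v b) ->
  exists a1 y0 P, detour v a1 y0 P.
Proof.
move=> vAB ha hb.
have [s [a1 [y0 [a1s va1 y0s vy0]]]] := splitter_same_side dAB iA iB cAB maxAB vAB ha hb.
have a1AB := mem_side_setU a1s.
have notv z : z \in A :|: B -> z != v by move=> zAB; apply: contraNneq vAB => <-.
case: (boolP [exists b in A :|: B, (b != a1) && adj v b]).
  case/exists_inP => b bAB /andP [ba1 vb].
  exists a1, y0, [:: b]; split => //.
  - exact: mem_side_setU y0s.
  - by rewrite (side_memB dAB a1s) (side_memB dAB y0s).
  - by rewrite /= !inE andbT eq_sym notv.
  - by rewrite /= vb.
  - by rewrite !inE negb_or notv // eq_sym.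
  - rewrite !inE negb_or notv ?(mem_side_setU y0s) //=.
    by apply: contraNneq vy0 => ->.
move=> only_a1.
have [b' b's] : exists b', b' \in side A B (~~ s).
  by apply/card_gt0P; rewrite (leq_trans _ (side_ge3 _)).
have a1b' : adj a1 b' by apply: (side_adj cAB a1s b's); case: s {a1s y0s b's}.
have b'a1 : b' != a1 by apply: contraTneq a1b' => ->; rewrite sadj_irr.
have cvb' : connect (adj_del a1) v b'.
  apply: (connect_del_noncut (@noncut a1) _ b'a1 va1); first by rewrite eq_sym notv.
  exact: connect_trans (connect1 va1) (connect1 a1b').
have [P [Ppath Puniq Plast Pfirst]] :=
  connect_first_hit cvb' vAB (mem_side_setU b's).
have : 0 < #|side A B s :\: [set a1; last v P]|.
  rewrite cardsD subn_gt0 (leq_ltn_trans (subset_leq_card (subsetIr _ _))) //.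
  by rewrite cards2 (leq_trans _ (side_ge3 s)) //; case: (a1 != _).
case/card_gt0P => y1; rewrite !inE negb_or => /andP [/andP [y1a1 y1w] y1s].
have y1AB := mem_side_setU y1s.
exists a1, y1, P; split => //.
- by rewrite (side_memB dAB y1s) (side_memB dAB a1s).
- apply: contra only_a1 => vy1; apply/exists_inP; exists y1 => //.
  by rewrite y1a1.
- by apply: sub_path Ppath => x y /and3P [].
- rewrite inE negb_or notv //=.
  by apply/negP => /(path_del_neq Ppath); rewrite eqxx.
- rewrite inE negb_or notv //=.
  by apply: contra y1w => /Pfirst ->.
Qed.

End Detour.

Section Spider.
Variable t : nat.
Local Notation HV := (tS_vert t).

(* Parity of the distance to the centre; the leg vertex with index p is at
   distance p + 1. *)
Definition tS_colour (z : HV) : bool := if z.2 is Some (_, p) then ~~ odd p else false.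

Lemma tS_adj_colour (z z' : HV) : tS_adj z z' -> tS_colour z != tS_colour z'.
Proof.
case: z => c [[j p]|]; case: z' => c' [[j' p']|];
  rewrite /tS_adj /tS_adj0 /tS_colour /= ?andbF ?orbF ?orFb //=.
- by case/orP => /and3P [_ _ /eqP ->] /=; rewrite ?negbK; case: (odd _).
- by case/andP => _ /eqP ->.
- by case/andP => _ /eqP ->.
Qed.

Lemma tS_adj_copy (z z' : HV) : tS_adj z z' -> z.1 = z'.1.
Proof. by rewrite /tS_adj /tS_adj0 => /orP [] /andP [/eqP -> _]. Qed.

Variables (c : 'I_t) (j : 'I_3) (p : 'I_t).

Definition leg_vertex : HV := (c, Some (j, p)).

Definition in_tail (z : HV) : bool :=
  (z.1 == c) && (if z.2 is Some (j', q) then (j' == j) && (p <= q) else false).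

Definition tail_pos (z : HV) : nat := if z.2 is Some (_, q) then q - p else 0.

Definition leg_inner : HV :=
  if val p is n.+1 then (c, Some (j, insubd p n)) else (c, None).

Lemma in_tail_leg : in_tail leg_vertex.
Proof. by rewrite /in_tail /= !eqxx leqnn. Qed.

Lemma tail_pos_leg : tail_pos leg_vertex = 0.
Proof. by rewrite /tail_pos /= subnn. Qed.

Lemma val_insubd_pred n : val p = n.+1 -> val (insubd p n : 'I_t) = n.
Proof. by move=> pE; rewrite val_insubd (ltn_trans _ (ltn_ord p)) // pE. Qed.

Lemma leg_inner_notin_tail : ~~ in_tail leg_inner.
Proof.
rewrite /leg_inner /in_tail; case pE: (val p) => [|n] /=; first by rewrite andbF.
by rewrite (val_insubd_pred pE) pE ltnn !andbF.
Qed.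

Lemma adj_leg_inner : tS_adj leg_vertex leg_inner.
Proof.
rewrite /leg_vertex /leg_inner /tS_adj /tS_adj0; case pE: (val p) => [|n] /=.
  by rewrite eqxx pE orbT.
by rewrite (val_insubd_pred pE) pE !eqxx orbT.
Qed.

Lemma tail_exit (z z' : HV) : tS_adj z z' -> in_tail z -> ~~ in_tail z' ->
  z = leg_vertex /\ z' = leg_inner.
Proof.
case: z => cz [[jz qz]|]; last by rewrite /in_tail andbF.
rewrite /in_tail /= => + /andP [/eqP ecz /andP [/eqP ejz pq]]; subst cz jz.
case: z' => cz' [[jz' qz']|]; rewrite /tS_adj /tS_adj0 /=.
- move=> /orP [] /and3P [/eqP ec /eqP ej /eqP eq]; subst.
  + by rewrite !eqxx /= eq (leq_trans pq (leqnSn _)).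
  + rewrite !eqxx /= -ltnNge => qp.
    have pE : val p = qz'.+1 by apply/eqP; rewrite eqn_leq qp -eq pq.
    split; first by congr (_, Some (_, _)); apply/val_inj; rewrite /= pE.
    rewrite /leg_inner pE; congr (_, Some (_, _)).
    by apply/val_inj; rewrite /= val_insubd_pred.
- rewrite andbF /= => /andP [/eqP ec /eqP q0] _; subst.
  have p0 : val p = 0 by apply/eqP; rewrite -leqn0 -q0.
  split; first by congr (_, Some (_, _)); apply/val_inj; rewrite /= p0 q0.
  by rewrite /leg_inner p0.
Qed.

Lemma tail_adj_pos (z z' : HV) : tS_adj z z' -> in_tail z -> in_tail z' ->
  tail_pos z' = (tail_pos z).+1 \/ tail_pos z = (tail_pos z').+1.
Proof.
case: z => cz [[jz qz]|]; last by rewrite /in_tail andbF.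
case: z' => cz' [[jz' qz']|]; last by rewrite /in_tail andbF.
rewrite /in_tail /tail_pos /tS_adj /tS_adj0 /=.
move=> + /andP [_ /andP [_ pz]] /andP [_ /andP [_ pz']].
by case/orP => /and3P [_ _ /eqP ->]; [left|right]; rewrite subSn.
Qed.

Lemma tail_pos_inj (z z' : HV) :
  in_tail z -> in_tail z' -> tail_pos z = tail_pos z' -> z = z'.
Proof.
case: z => cz [[jz qz]|]; last by rewrite /in_tail andbF.
case: z' => cz' [[jz' qz']|]; last by rewrite /in_tail andbF.
rewrite /in_tail /tail_pos /= => /andP [/eqP -> /andP [/eqP -> h1]].
move=> /andP [/eqP -> /andP [/eqP -> h2]] e.
by congr (_, Some (_, _)); apply/val_inj => /=; lia.
Qed.

End Spider.

Lemma tS_odd_nonadj t (x y : tS_vert t) :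
  ~~ tS_adj x y -> x.1 = y.1 -> tS_colour x != tS_colour y ->
  exists c j p, (x = leg_vertex c j p /\ ~~ in_tail c j p y) \/
                (y = leg_vertex c j p /\ ~~ in_tail c j p x).
Proof.
case: x => cx [[jx px]|]; case: y => cy [[jy py]|] //= _ e hcol.
- case: (boolP (in_tail cx jx px (cy, Some (jy, py)))) => yx; last first.
    by exists cx, jx, px; left.
  exists cy, jy, py; right; split => //.
  move: yx hcol; rewrite /in_tail /tS_colour /= -e eqxx /=.
  move=> /andP [/eqP -> pxy] hcol; apply/negP => /andP [_ pyx]; move: hcol.
  have -> : px = py by apply/val_inj/eqP; rewrite eqn_leq pxy pyx.
  by rewrite eqxx.
- by exists cx, jx, px; left; split => //; rewrite /in_tail andbF.
- by exists cy, jy, py; right; split; [rewrite -e | rewrite /in_tail andbF].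
Qed.

Section SpiderEmbeddings.
Variable t : nat.
Variable G : sgraph.
Local Notation V := (svert G).
Local Notation adj := (@sadj G).
Local Notation HV := (tS_vert t).
Variables A B : {set V}.
Hypothesis dAB : [disjoint A & B].
Hypothesis iA : independent A.
Hypothesis iB : independent B.
Hypothesis cAB : complete_to A B.
Hypothesis HV_le_A : #|HV| <= #|A|.
Hypothesis HV_le_B : #|HV| <= #|B|.

Lemma bipartite_embedding (g0 : V) (f : 'I_t -> bool) :
  exists phi : HV -> V, embedding (H := tStt t) phi /\
    forall z, phi z \in side A B (tS_colour z (+) f z.1).
Proof.
have g0_inj : {in set0 &, injective (fun _ : HV => g0)} by move=> z; rewrite inE.
have [phi [phi_inj _ phi_side]] :=
  injective_extension_in_sides (fun z => tS_colour z (+) f z.1) dAB HV_le_A HV_le_B g0_inj.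
have {}phi_side z : phi z \in side A B (tS_colour z (+) f z.1).
  by have /setDP [] := phi_side z (negbT (in_set0 z)).
exists phi; split => //; split => // z z' zz'.
apply: (side_adj cAB (phi_side z) (phi_side z')).
rewrite (tS_adj_copy zz').
by move: (tS_adj_colour zz'); case: (tS_colour z); case: (tS_colour z'); case: (f _).
Qed.

Section Gadget.
Variables (v a1 y0 : V) (P : seq V).
Hypothesis vP : detour A B v a1 y0 P.
Variables (c : 'I_t) (j : 'I_3) (p : 'I_t) (Y : HV).
Hypothesis Y_off_tail : ~~ in_tail c j p Y.
Hypothesis Y_colour : tS_colour Y != tS_colour (leg_vertex c j p).
Hypothesis Y_nadj : ~~ tS_adj (leg_vertex c j p) Y.

Local Notation X := (leg_vertex c j p).
Local Notation u := (leg_inner c j p).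
Local Notation tail := (in_tail c j p).
Local Notation pos := (tail_pos p).

(* X is sent to v, u to a1 and Y to y0; the tail of X is laid along the path
   v :: P and, beyond it, alternately through the two sides; everything else is
   coloured so that u lands on the side of a1. *)
Let on_path z := tail z && (pos z < size (v :: P)).
Let sigma z := if on_path z then nth v (v :: P) (pos z) else if z == u then a1 else y0.
Let S := [set z | on_path z || (z == u) || (z == Y)].
Let sd z := if tail z then (last v P \in B) (+) odd (pos z - size P)
            else (a1 \in B) (+) (tS_colour z (+) tS_colour u).

Lemma gadget_Y_ne_u : Y != u.
Proof. by apply: contraNneq Y_nadj => ->; exact: adj_leg_inner. Qed.

Lemma gadget_colour_Y_u : tS_colour Y = tS_colour u.
Proof.
move: Y_colour (tS_adj_colour (adj_leg_inner c j p)).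
by case: (tS_colour Y); case: (tS_colour u); case: (tS_colour X).
Qed.

Lemma gadget_y0_ne_a1 : y0 != a1.
Proof. by apply: contraNneq (detour_nadj_y0 vP) => ->; exact: detour_adj_a1 vP. Qed.

Lemma gadget_sigma_on_path z : on_path z -> sigma z \in v :: P.
Proof. by rewrite /sigma => zP; rewrite zP mem_nth //; case/andP: zP. Qed.

Lemma gadget_sigma_off_path z : ~~ on_path z -> sigma z \notin v :: P.
Proof.
rewrite /sigma => /negbTE ->.
by case: (z == u); [exact: detour_a1_notin vP | exact: detour_y0_notin vP].
Qed.

Lemma gadget_sigma_inj : {in S &, injective sigma}.
Proof.
move=> z z'; rewrite !inE => zS z'S.
case: (boolP (on_path z)) => zP; case: (boolP (on_path z')) => z'P.
- move: (zP) (z'P) => /andP [tz lz] /andP [tz' lz'].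
  rewrite /sigma zP z'P => /eqP; rewrite nth_uniq ?(detour_uniq vP) // => /eqP.
  exact: tail_pos_inj tz tz'.
- by move=> e; have := gadget_sigma_off_path z'P; rewrite -e gadget_sigma_on_path.
- by move=> e; have := gadget_sigma_off_path zP; rewrite e gadget_sigma_on_path.
move: zS z'S; rewrite /sigma (negbTE zP) (negbTE z'P) /=.
move=> /orP [] /eqP -> /orP [] /eqP -> //; rewrite eqxx (negbTE gadget_Y_ne_u) => e.
- by move: gadget_y0_ne_a1; rewrite e eqxx.
- by move: gadget_y0_ne_a1; rewrite e eqxx.
Qed.

Section ExtendedMap.
Variable phi : HV -> V.
Hypothesis phi_inj : injective phi.
Hypothesis phi_S : {in S, phi =1 sigma}.
Hypothesis phi_out : forall z, z \notin S -> phi z \in side A B (sd z) :\: sigma @: S.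

Lemma gadget_phi_X : phi X = v.
Proof.
have XP : on_path X by rewrite /on_path in_tail_leg tail_pos_leg.
by rewrite phi_S ?inE ?XP // /sigma XP tail_pos_leg.
Qed.

Lemma gadget_phi_u : phi u = a1.
Proof.
have uP : on_path u = false by rewrite /on_path (negbTE (leg_inner_notin_tail c j p)).
by rewrite phi_S ?inE ?uP ?eqxx // /sigma uP eqxx.
Qed.

Lemma gadget_phi_Y : phi Y = y0.
Proof.
have YP : on_path Y = false by rewrite /on_path (negbTE Y_off_tail).
by rewrite phi_S ?inE ?YP ?eqxx ?orbT // /sigma YP (negbTE gadget_Y_ne_u).
Qed.

Lemma gadget_phi_side_off_tail z : ~~ tail z ->
  phi z \in side A B ((a1 \in B) (+) (tS_colour z (+) tS_colour u)).
Proof.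
move=> zt; case: (eqVneq z u) => [->|zu].
  by rewrite gadget_phi_u addbb addbF; exact: side_mem (detour_a1 vP).
case: (eqVneq z Y) => [->|zY].
  rewrite gadget_phi_Y gadget_colour_Y_u addbb addbF -(detour_same_side vP).
  exact: side_mem (detour_y0 vP).
have zS : z \notin S by rewrite inE /on_path (negbTE zt) (negbTE zu) (negbTE zY).
by have /setDP [] := phi_out zS; rewrite /sd (negbTE zt).
Qed.

Lemma gadget_phi_side_tail z : tail z -> size P <= pos z ->
  phi z \in side A B ((last v P \in B) (+) odd (pos z - size P)).
Proof.
move=> zt Pz; case: (ltnP (pos z) (size (v :: P))) => zP.
  have ez : pos z = size P by apply/eqP; rewrite eqn_leq Pz andbT -ltnS.
  have zS : on_path z by rewrite /on_path zt zP.
  rewrite phi_S ?inE ?zS // /sigma zS ez subnn addbF (nth_last v (v :: P)) /=.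
  exact: side_mem (detour_last vP).
have zS : z \notin S.
  rewrite inE /on_path zt ltnNge zP /=.
  by apply/norP; split; apply: contraTneq zt => ->;
    [exact: leg_inner_notin_tail | exact: Y_off_tail].
by have /setDP [] := phi_out zS; rewrite /sd zt.
Qed.

Lemma gadget_phi_tail_step z z' : tail z -> tail z' -> pos z' = (pos z).+1 ->
  adj (phi z) (phi z').
Proof.
move=> zt z't ez'; case: (ltnP (pos z') (size (v :: P))) => z'P.
  have zP : pos z < size (v :: P) by rewrite (ltn_trans _ z'P) // ez'.
  rewrite !phi_S ?inE /on_path ?zt ?z't ?zP ?z'P // /sigma /on_path zt z't zP z'P /=.
  by rewrite ez'; move/(pathP v): (detour_path vP); apply; rewrite -ez'.
have Pz : size P <= pos z by rewrite -ltnS -ez'.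
have Pz' : size P <= pos z' by rewrite ez' ltnW.
apply: (side_adj cAB (gadget_phi_side_tail zt Pz) (gadget_phi_side_tail z't Pz')).
by rewrite ez' subSn //=; case: (_ \in B); case: (odd _).
Qed.

Lemma gadget_phi_embedding : embedding (H := tStt t) phi.
Proof.
split => // z z' zz'; have {}zz' : tS_adj z z' := zz'.
case: (boolP (tail z)) => zt; case: (boolP (tail z')) => z't.
- case: (tail_adj_pos zz' zt z't) => ez; first exact: gadget_phi_tail_step.
  by rewrite sadj_sym; exact: gadget_phi_tail_step.
- have [-> ->] := tail_exit zz' zt z't.
  by rewrite gadget_phi_X gadget_phi_u (detour_adj_a1 vP).
- rewrite tS_adj_sym in zz'.
  have [-> ->] := tail_exit zz' z't zt.
  by rewrite gadget_phi_X gadget_phi_u sadj_sym (detour_adj_a1 vP).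
apply: (side_adj cAB (gadget_phi_side_off_tail zt) (gadget_phi_side_off_tail z't)).
move: (tS_adj_colour zz').
by case: (tS_colour z); case: (tS_colour z'); case: (tS_colour u); case: (a1 \in B).
Qed.

End ExtendedMap.

Lemma gadget_embedding :
  exists phi : HV -> V, embedding (H := tStt t) phi /\ ~~ adj (phi X) (phi Y).
Proof.
have [phi [phi_inj phi_S phi_out]] :=
  injective_extension_in_sides sd dAB HV_le_A HV_le_B gadget_sigma_inj.
exists phi; split; first exact: gadget_phi_embedding phi_inj phi_S phi_out.
by rewrite (gadget_phi_X phi_S) (gadget_phi_Y phi_S) (detour_nadj_y0 vP).
Qed.

End Gadget.

Lemma separating_embedding (v a1 y0 : V) (P : seq V) (x y : HV) :
  detour A B v a1 y0 P -> ~~ tS_adj x y ->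
  exists phi : HV -> V, embedding (H := tStt t) phi /\ ~~ adj (phi x) (phi y).
Proof.
move=> vP nxy.
case: (boolP ((x.1 != y.1) || (tS_colour x == tS_colour y))) => [same_side|].
  pose f k := (k == x.1) && (tS_colour x != tS_colour y).
  have [phi [emb phi_side]] := bipartite_embedding v f.
  exists phi; split => //; apply: (side_nadj iA iB (phi_side x)).
  have -> : tS_colour x (+) f x.1 = tS_colour y (+) f y.1.
    rewrite /f eqxx /=; case/orP: same_side => [ne | /eqP ->].
      by rewrite (eq_sym y.1) (negbTE ne) /=; case: (tS_colour x); case: (tS_colour y).
    by rewrite eqxx /= andbF.
  exact: phi_side.
rewrite negb_or negbK => /andP [/eqP e col].
have [c [j [p [[xE yt] | [yE xt]]]]] := tS_odd_nonadj nxy e col.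
  by subst x; rewrite eq_sym in col; exact: (gadget_embedding vP yt col nxy).
subst y; rewrite tS_adj_sym in nxy.
have [phi [emb nadj]] := gadget_embedding vP xt col nxy.
by exists phi; split; rewrite // sadj_sym.
Qed.

End SpiderEmbeddings.

Lemma is_module_no_splitter (G : sgraph) (U : {set svert G}) :
  (forall v, v \notin U -> (exists2 a, a \in U & sadj v a) ->
     (exists2 b, b \in U & ~~ sadj v b) -> False) ->
  is_module U.
Proof.
move=> nosplit v vU.
case: (boolP [forall u in U, sadj v u]) => [/forall_inP vU_adj|/forall_inPn [b bU vb]].
  by left => x y /set1P -> /vU_adj.
right => x a /set1P -> aU; apply/negP => va.
exact: nosplit vU (ex_intro2 _ _ a aU va) (ex_intro2 _ _ b bU vb).
Qed.

Lemma card_tS_vert_le t n : 3 * t ^ 2 + t + 1 <= n -> #|tS_vert t| <= n.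
Proof. by rewrite /tS_vert card_prod card_option card_prod !card_ord; lia. Qed.

Theorem mainTheorem3 (t : nat) (G : sgraph) (A B : {set svert G}) :
  X_class t G ->
  (forall v : svert G, ~ cut_vertex v) ->
  [disjoint A & B] ->
  independent A -> independent B -> complete_to A B ->
  3 * t ^ 2 + t + 1 <= #|A| -> 3 * t ^ 2 + t + 1 <= #|B| ->
  (~ exists A' B' : {set svert G},
       (A \subset A') /\ (B \subset B') /\ [disjoint A' & B'] /\
       independent A' /\ independent B' /\ complete_to A' B' /\
       (A :|: B \proper A' :|: B')) ->
  is_module (A :|: B).
Proof.
move=> X_free noncut dAB iA iB cAB A_big B_big maxAB.
have [HV_le_A HV_le_B] := (card_tS_vert_le A_big, card_tS_vert_le B_big).
apply: is_module_no_splitter => v vAB ha hb.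
apply: (X_free _ erefl).
have [phi0 [emb0 _]] := bipartite_embedding dAB cAB HV_le_A HV_le_B v (fun _ => false).
apply: (si_to_of_embeddings emb0) => x y nxy.
have t_gt0 : 0 < t := leq_ltn_trans (leq0n _) (ltn_ord x.1).
have ge3 n : 3 * t ^ 2 + t + 1 <= n -> 3 <= n by lia.
have [a1 [y0 [P vP]]] :=
  detour_exists dAB iA iB cAB maxAB noncut (ge3 _ A_big) (ge3 _ B_big) vAB ha hb.
exact: (separating_embedding dAB iA iB cAB HV_le_A HV_le_B vP nxy).
Qed.
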